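(* Let $N\in\mathbb{N}$, $K\in\mathbb{N}$ with $K<N$, and let $h,p_1,\dots,p_T\in[0,1]$ satisfy $$h=\sum_{i=1}^T p_i\le \frac{K-\sqrt K}{N}.$$ Let $X_1,\dots,X_T$ be independent random variables with $X_i\sim\mathrm{Bin}(N,p_i)$. Then $$\mathbb{P}\Big(\bigvee_{i=1}^T (X_i>K)\Big)\le\left(\frac{eNh}{K}\right)^K e^{-Nh}.$$
   Context: $\mathrm{Bin}(n,p)$ denotes the binomial distribution with $n$ trials and success probability $p$. *)

From HB Require Import structures.
From mathcomp Require Import all_boot all_order all_algebra.
From mathcomp Require Import all_classical all_reals all_analysis.
Set Implicit Arguments. Unset Strict Implicit. Unset Printing Implicit Defensive.
Import Order.TTheory GRing.Theory Num.Theory.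
Local Open Scope classical_set_scope.
Local Open Scope ring_scope.

(* Mutual independence of a finite family (X_i)_{i < n} of random variables
   with values in a measurable space T': for every family of measurable sets
   (B_i), P(/\_i X_i \in B_i) = prod_i P(X_i \in B_i).  (Taking B_i = setT for
   i outside a subfamily J gives the product rule for every subfamily.) *)
Definition mutually_independent_RV d d' (Omega : measurableType d)
  (T' : measurableType d') (R : realType) (P : probability Omega R) (n : nat)
  (X : 'I_n -> {RV P >-> T'}) : Prop :=
  forall B : 'I_n -> set T', (forall i, measurable (B i)) ->
    P (\big[setI/setT]_(i < n) (X i @^-1` B i)) =
    (\prod_(i < n) P (X i @^-1` B i))%E.

From HB Require Import structures.
From mathcomp Require Import all_boot all_order all_algebra.
From mathcomp Require Import all_classical all_reals all_analysis.
From mathcomp Require Import ring lra.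
Import Order.TTheory GRing.Theory Num.Theory.
Local Open Scope classical_set_scope.
Local Open Scope ring_scope.

(* By the union bound it suffices to bound each
   tail P(X_i > K) by the Chernoff bound g(N p_i), g(mu) = (e mu / K)^K e^-mu,
   obtained from the exponential moment with tilt t = K / (N p_i).  Since
   g(mu) / mu is proportional to mu^(K-1) e^-mu, it is nondecreasing on
   [0, K - 1]; hence g is superadditive there and sum_i g(N p_i) <= g(N h),
   the hypothesis on h ensuring N h <= K - sqrt K <= K - 1. *)

Lemma measure_bigsetU_ord_le {d} {R : realFieldType} {T : ringOfSetsType d}
    (mu : {content set T -> \bar R}) {n} {F : 'I_n -> set T} :
  (forall i, measurable (F i)) ->
  (mu (\big[setU/set0]_(i < n) F i) <= \sum_(i < n) mu (F i))%E.
Proof.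
move=> mF; pose A k := if insub k is Some i then F i else set0.
have AF (i : 'I_n) : A i = F i by rewrite /A valK.
under eq_bigr do rewrite -AF; under [X in (_ <= X)%E]eq_bigr do rewrite -AF.
by apply: Boole_inequality => k _; rewrite /A; case: insub.
Qed.

Lemma ler_term_sum {R : numDomainType} {I : finType} {F : I -> R} (i : I) :
  (forall j, 0 <= F j) -> F i <= \sum_j F j.
Proof. by move=> F0; rewrite (bigD1 i) //= lerDl sumr_ge0. Qed.

Section chernoff.
Context {R : realType}.

Lemma binomial_prob_tailE (N K : nat) (p : R) : 0 <= p <= 1 ->
  binomial_prob N p [set k | (K < k)%N] =
  (\sum_(k < N.+1) binomial_pmf N p k * (K < k)%N%:R)%:E.
Proof.
case/andP => p0 p1; rewrite (@binomial_probE R N p p0 p1) -sumEFin.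
apply: eq_bigr => k _; rewrite diracE -EFinM.
suff -> : (nat_of_ord k \in [set k | (K < k)%N]) = (K < k)%N by [].
by apply/idP/idP => [/set_mem|/mem_set].
Qed.

Lemma binomial_tail_le_tilted (N K : nat) (p t : R) : 0 <= p <= 1 -> 1 <= t ->
  \sum_(k < N.+1) binomial_pmf N p k * (K < k)%N%:R <= (1 - p + p * t) ^+ N / t ^+ K.
Proof.
move=> p01 t1; have t0 : 0 < t by lra.
have -> : (1 - p + p * t) ^+ N / t ^+ K =
    \sum_(k < N.+1) binomial_pmf N p k * (t ^+ k / t ^+ K).
  rewrite exprDn mulr_suml; apply: eq_bigr => k _.
  rewrite /binomial_pmf /unstable.onem exprMn.
  by rewrite -[in LHS]mulr_natr -[in RHS]mulr_natr; ring.
apply: ler_sum => k _; apply: ler_wpM2l; first exact: binomial_pmf_ge0.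
case: ltnP => Kk; last by rewrite divr_ge0 // exprn_ge0 // ltW.
by rewrite ler_pdivlMr ?exprn_gt0 // mul1r ler_weXn2l // ltnW.
Qed.

Lemma binomial_pgf_le_expR (N : nat) (p t : R) : 0 <= p -> 1 <= t ->
  (1 - p + p * t) ^+ N <= expR (N%:R * p * (t - 1)).
Proof.
move=> p0 t1; rewrite -mulrA expRM_natl; apply: lerXn2r; rewrite ?nnegrE ?expR_ge0 //.
  by nra.
by have := expR_ge1Dx (p * (t - 1)); lra.
Qed.

Lemma binomial_tail_mean0 (N K : nat) (p : R) : N%:R * p = 0 ->
  \sum_(k < N.+1) binomial_pmf N p k * (K < k)%N%:R = 0.
Proof.
move=> /eqP; rewrite mulf_eq0 pnatr_eq0 => /orP[/eqP->|/eqP->].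
  by rewrite big_ord1 mulr0.
apply: big1 => k _; case: ltnP => Kk; last by rewrite mulr0.
by rewrite /binomial_pmf expr0n gtn_eqF ?(leq_ltn_trans _ Kk) // !mul0r mul0rn mul0r.
Qed.

Definition chernoff_bound (K : nat) (mu : R) : R :=
  (expR 1 * mu / K%:R) ^+ K * expR (- mu).

Lemma chernoff_bound0 (K : nat) : (0 < K)%N -> chernoff_bound K 0 = 0.
Proof. by case: K => // K _; rewrite /chernoff_bound mulr0 mul0r expr0n mul0r. Qed.

Lemma binomial_tail_le_chernoff (N K : nat) (p : R) : 0 <= p <= 1 -> (0 < K)%N ->
  N%:R * p <= K%:R ->
  \sum_(k < N.+1) binomial_pmf N p k * (K < k)%N%:R <= chernoff_bound K (N%:R * p).
Proof.
move=> p01 K0 NpK; have /andP[p0 _] := p01; have K_gt0 : 0 < K%:R :> R by rewrite ltr0n.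
have [mu0|mu_neq0] := eqVneq (N%:R * p) 0.
  by rewrite mu0 chernoff_bound0 // binomial_tail_mean0.
have mu_gt0 : 0 < N%:R * p by rewrite lt_def mu_neq0 mulr_ge0.
pose t := K%:R / (N%:R * p).
have t1 : 1 <= t by rewrite /t ler_pdivlMr // mul1r.
have tK_ge0 : 0 <= (t ^+ K)^-1 by rewrite invr_ge0 exprn_ge0 //; lra.
have t_mean : N%:R * p * (t - 1) = K%:R - N%:R * p.
  by rewrite mulrBr mulr1 /t mulrC divfK.
have -> : chernoff_bound K (N%:R * p) = expR (K%:R - N%:R * p) / t ^+ K.
  rewrite /chernoff_bound /t expRD -[K%:R]mulr1 expRM_natl mulr1 !expr_div_n.
  by rewrite [(expR 1 * _) ^+ _]exprMn; field; rewrite !expf_neq0 // lt0r_neq0.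
apply: le_trans (binomial_tail_le_tilted N K p t p01 t1) _.
by rewrite -t_mean ler_wpM2r // binomial_pgf_le_expR.
Qed.

Lemma binomial_prob_tail_le (N K : nat) (p : R) : 0 <= p <= 1 -> (0 < K)%N ->
  N%:R * p <= K%:R ->
  (binomial_prob N p [set k | (K < k)%N] <= (chernoff_bound K (N%:R * p))%:E)%E.
Proof.
by move=> p01 K0 NpK; rewrite binomial_prob_tailE // lee_fin binomial_tail_le_chernoff.
Qed.

Lemma exprn_expRN_le (n : nat) (x y : R) : 0 <= x <= y -> y <= n%:R ->
  x ^+ n * expR (- x) <= y ^+ n * expR (- y).
Proof.
case/andP => x0 xy yn; have [y0|y_gt0] := eqVneq y 0.
  have x_eq0 : x = 0 by lra.
  by rewrite x_eq0 y0.
have {y_gt0} y_gt0 : 0 < y by rewrite lt_def y_gt0 /=; lra.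
have x_le : x <= y * expR ((x - y) / y).
  rewrite mulrC -ler_pdivrMr //.
  have -> : x / y = 1 + (x - y) / y by field; rewrite lt0r_neq0.
  exact: expR_ge1Dx.
have xn_le : x ^+ n <= y ^+ n * expR (n%:R * ((x - y) / y)).
  by rewrite expRM_natl -exprMn lerXn2r // nnegrE // mulr_ge0 ?expR_ge0 // ltW.
have exponent_le : n%:R * ((x - y) / y) <= x - y.
  by rewrite mulrA ler_pdivrMr //; nra.
apply: le_trans (ler_wpM2r (expR_ge0 _) xn_le) _.
rewrite -mulrA -expRD; apply: ler_wpM2l; first by rewrite exprn_ge0 // ltW.
by rewrite ler_expR; lra.
Qed.

Lemma chernoff_bound_le_scaled (K : nat) (mu M : R) : 0 <= mu <= M -> 0 < M ->
  M <= K%:R - 1 -> chernoff_bound K mu <= mu / M * chernoff_bound K M.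
Proof.
case: K => [|K] muM M0 MK; first by move: MK; lra.
have MK' : M <= K%:R by move: MK; rewrite -addn1 natrD; lra.
pose c : R := (expR 1 / K.+1%:R) ^+ K.+1.
have c0 : 0 <= c by rewrite exprn_ge0 // divr_ge0 ?expR_ge0.
have chE z : chernoff_bound K.+1 z = c * z * (z ^+ K * expR (- z)).
  by rewrite /chernoff_bound /c mulrAC exprMn [z ^+ K.+1]exprS; ring.
rewrite !chE.
have -> : mu / M * (c * M * (M ^+ K * expR (- M))) = c * mu * (M ^+ K * expR (- M)).
  by field; rewrite lt0r_neq0.
apply: ler_wpM2l.
  by case/andP: muM => mu0 _; rewrite mulr_ge0.
exact: exprn_expRN_le.
Qed.

Lemma chernoff_bound_sum_le (I : finType) (K : nat) (mu : I -> R) :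
  (forall i, 0 <= mu i) -> \sum_i mu i <= K%:R - 1 ->
  \sum_i chernoff_bound K (mu i) <= chernoff_bound K (\sum_i mu i).
Proof.
move=> mu0; set M := \sum_i mu i => MK.
have M0 : 0 <= M by rewrite sumr_ge0.
have K0 : (0 < K)%N by rewrite -(ltr0n R); lra.
have [M_eq0|M_gt0] := eqVneq M 0.
  have mu_eq0 := psumr_eq0P (fun i _ => mu0 i) M_eq0.
  rewrite M_eq0 chernoff_bound0 // big1 // => i _.
  by rewrite mu_eq0 ?chernoff_bound0.
have {M_gt0} M_gt0 : 0 < M by rewrite lt_def M_gt0.
apply: le_trans (_ : \sum_i mu i / M * chernoff_bound K M <= _).
  by apply: ler_sum => i _; rewrite chernoff_bound_le_scaled // mu0 ler_term_sum.
by rewrite -mulr_suml -mulr_suml -/M divff ?mul1r // lt0r_neq0.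
Qed.

End chernoff.

Lemma binomial_tails_union_le {R : realType} {d} {Omega : measurableType d}
    (P : probability Omega R) (N K T : nat) (p : 'I_T -> R)
    (X : 'I_T -> {RV P >-> nat}) :
  (0 < K)%N -> (forall i, 0 <= p i <= 1) -> (forall i, N%:R * p i <= K%:R) ->
  (forall i, distribution P (X i) = binomial_prob N (p i)) ->
  (P (\big[setU/set0]_(i < T) (X i @^-1` [set k | (K < k)%N]))
   <= (\sum_(i < T) chernoff_bound K (N%:R * p i))%:E)%E.
Proof.
move=> K0 p01 NpK hX.
have mX i : measurable (X i @^-1` [set k | (K < k)%N]) by exact: measurable_funPTI.
apply: le_trans (measure_bigsetU_ord_le P mX) _.
rewrite -sumEFin; apply: lee_sum => i _.
rewrite [leLHS](_ : _ = distribution P (X i) [set k | (K < k)%N]) // hX.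
exact: binomial_prob_tail_le.
Qed.

Theorem lemma10 (R : realType) (d : measure_display) (Omega : measurableType d)
  (P : probability Omega R) (N K T : nat) (h : R) (p : 'I_T -> R)
  (X : 'I_T -> {RV P >-> nat}) :
  (K < N)%N ->
  0 <= h <= 1 ->
  (forall i, 0 <= p i <= 1) ->
  h = \sum_(i < T) p i ->
  h <= (K%:R - Num.sqrt K%:R) / N%:R ->
  mutually_independent_RV X ->
  (forall i, distribution P (X i) = binomial_prob N (p i)) ->
  (P (\big[setU/set0]_(i < T) (X i @^-1` [set k | (K < k)%N]))
   <= ((expR 1 * N%:R * h / K%:R) ^+ K * expR (- (N%:R * h)))%:E)%E.
Proof.
move=> KN /andP[h0 _] p01 hE hle _ hX.
have NR : 0 < N%:R :> R by rewrite ltr0n (leq_ltn_trans _ KN).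
have Nh_le : N%:R * h <= K%:R - Num.sqrt K%:R by rewrite mulrC -ler_pdivlMr.
have Np_ge0 i : 0 <= N%:R * p i by case/andP: (p01 i) => p0 _; rewrite mulr_ge0.
have NhE : N%:R * h = \sum_(i < T) N%:R * p i by rewrite hE mulr_sumr.
case: K KN hle Nh_le => [|K] _ _ Nh_le.
  rewrite expr0 mul1r; move: Nh_le; rewrite sqrtr0 subr0 => Nh_le.
  have -> : N%:R * h = 0 by apply/eqP; rewrite eq_le Nh_le mulr_ge0 // ltW.
  rewrite oppr0 expR0 probability_le1 //; apply: bigsetU_measurable => i _.
  exact: measurable_funPTI.
have sqrtK_ge1 : 1 <= Num.sqrt K.+1%:R :> R.
  by rewrite -[X in X <= _]sqrtr1 ler_sqrt ?ler1n.
have NhK : N%:R * h <= K.+1%:R - 1 by lra.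
have NpK i : N%:R * p i <= K.+1%:R.
  by have := ler_term_sum i Np_ge0; rewrite -NhE; lra.
have union_le := binomial_tails_union_le P N K.+1 T p X (ltn0Sn K) p01 NpK hX.
apply: le_trans union_le _.
rewrite lee_fin -[expR 1 * _ * h]mulrA -/(chernoff_bound K.+1 (N%:R * h)) NhE.
by apply: chernoff_bound_sum_le; rewrite -?NhE.
Qed.
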